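(* Let $B\subseteq\mathcal{SC}\times\mathcal{SC}$ and let $\rho,\sigma_1,\sigma_2\in\mathcal{SC}$ all be stable, with $\rho\dashv_B\sigma_1$ and $\sigma_1\sqsubseteq_B\sigma_2$. If $\rho\|\sigma_2\xrightarrow{\tau}_B$ (i.e. $\rho\|\sigma_2$ has some $\tau$-move), then $\rho\|\sigma_1\xrightarrow{\tau}_B$.
   Context: Fix base types $BT$ with preorder $\leq_{\mathsf b}$ and labels $\mathcal L$. Contract terms: $\sigma::=\mathbf 1\mid ?\mathtt t.\sigma\mid !\mathtt t.\sigma\mid !(\sigma).\sigma\mid ?(\sigma).\sigma\mid \sum_{i\in I}?l_i.\sigma_i\mid \bigoplus_{i\in I}!l_i.\sigma_i\mid \mu x.\sigma\mid x$ ($I$ finite nonempty, labels distinct). $\mathcal{SC}$ = closed guarded terms. LTS: $\mathbf 1\xrightarrow\checkmark$; $\lambda.\sigma\xrightarrow\lambda\sigma$ for prefixes (including $!l.\sigma$); $\bigoplus_{i\in I}!l_i.\sigma_i\xrightarrow\tau!l_i.\sigma_i$ for $|I|>1$; $\sum ?l_i.\sigma_i\xrightarrow{?l_i}\sigma_i$; $\mu x.\sigma\xrightarrow\tau\sigma[\mu x.\sigma/x]$. A contract is stable if it has no $\tau$-transition. $\lambda_1\bowtie_B\lambda_2$ iff the pair is $(!l,?l)$, $(?l,!l)$, $(!\mathtt t_1,?\mathtt t_2)$ with $\mathtt t_1\leq_{\mathsf b}\mathtt t_2$, $(?\mathtt t_1,!\mathtt t_2)$ with $\mathtt t_2\leq_{\mathsf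 b}\mathtt t_1$, $(!(\sigma_1),?(\sigma_2))$ with $\sigma_1B\sigma_2$, $(?(\sigma_1),!(\sigma_2))$ with $\sigma_2B\sigma_1$. $\rho\|\sigma\xrightarrow\tau_B$ by a $\tau$ of either side, or $\rho\|\sigma\xrightarrow\tau_B\rho'\|\sigma'$ if $\rho\xrightarrow{\lambda_1}\rho'$, $\sigma\xrightarrow{\lambda_2}\sigma'$, $\lambda_1\bowtie_B\lambda_2$. $\dashv_B$: greatest $R$ with $\rho R\sigma$ implying (i) if $\rho\|\sigma$ has no $\xrightarrow\tau_B$ move then $\rho\xrightarrow\checkmark$ and $\sigma\xrightarrow\checkmark$; (ii) every $\rho\|\sigma\xrightarrow\tau_B\rho'\|\sigma'$ has $\rho'R\sigma'$. $\sigma_1\sqsubseteq_B\sigma_2$ iff for all $\rho\in\mathcal{SC}$, $\rho\dashv_B\sigma_1$ implies $\rho\dashv_B\sigma_2$. *)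

From Stdlib Require Import List Arith RelationClasses.
Import ListNotations.

(* Sum ls  = external choice  sum_{i} ?l_i.s_i
   Plus ls = internal choice  (+)_{i} !l_i.s_i  (with |I| = 1 this is the
             prefix !l.s) *)
Inductive term (BT L : Type) : Type :=
| One : term BT L
| InTy : BT -> term BT L -> term BT L
| OutTy : BT -> term BT L -> term BT L
| OutSes : term BT L -> term BT L -> term BT L
| InSes : term BT L -> term BT L -> term BT L
| Sum : list (L * term BT L) -> term BT L
| Plus : list (L * term BT L) -> term BT L
| Mu : nat -> term BT L -> term BT L
| Var : nat -> term BT L.
Arguments One {BT L}.
Arguments InTy {BT L}.
Arguments OutTy {BT L}.
Arguments OutSes {BT L}.
Arguments InSes {BT L}.
Arguments Sum {BT L}.
Arguments Plus {BT L}.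
Arguments Mu {BT L}.
Arguments Var {BT L}.

Fixpoint fv {BT L : Type} (s : term BT L) : list nat :=
  match s with
  | One => []
  | InTy _ t | OutTy _ t => fv t
  | OutSes a b | InSes a b => fv a ++ fv b
  | Sum ls | Plus ls =>
      (fix f (l : list (L * term BT L)) : list nat :=
         match l with [] => [] | (_, t) :: r => fv t ++ f r end) ls
  | Mu x t => remove Nat.eq_dec x (fv t)
  | Var x => [x]
  end.

Definition closed {BT L : Type} (s : term BT L) : Prop := fv s = [].

Fixpoint unguarded {BT L : Type} (s : term BT L) : list nat :=
  match s with
  | Var x => [x]
  | Mu y t => remove Nat.eq_dec y (unguarded t)
  | _ => []
  end.

Fixpoint wf_guarded {BT L : Type} (s : term BT L) : Prop :=
  match s with
  | One => True
  | InTy _ t | OutTy _ t => wf_guarded t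
  | OutSes a b | InSes a b => wf_guarded a /\ wf_guarded b
  | Sum ls | Plus ls =>
      ls <> [] /\ NoDup (map fst ls) /\
      (fix f (l : list (L * term BT L)) : Prop :=
         match l with [] => True | (_, t) :: r => wf_guarded t /\ f r end) ls
  | Mu x t => ~ In x (unguarded t) /\ wf_guarded t
  | Var _ => True
  end.

Definition SC {BT L : Type} (s : term BT L) : Prop := closed s /\ wf_guarded s.

(* substitution s[t/x] (capture is irrelevant: only used with closed t) *)
Fixpoint subst {BT L : Type} (x : nat) (t : term BT L) (s : term BT L) : term BT L :=
  match s with
  | One => One
  | InTy b u => InTy b (subst x t u)
  | OutTy b u => OutTy b (subst x t u)
  | OutSes a u => OutSes (subst x t a) (subst x t u)
  | InSes a u => InSes (subst x t a) (subst x t u)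
  | Sum ls => Sum (map (fun p => (fst p, subst x t (snd p))) ls)
  | Plus ls => Plus (map (fun p => (fst p, subst x t (snd p))) ls)
  | Mu y u => if Nat.eq_dec x y then Mu y u else Mu y (subst x t u)
  | Var y => if Nat.eq_dec x y then t else Var y
  end.

Inductive act (BT L : Type) : Type :=
| Check : act BT L
| Tau : act BT L
| AInT : BT -> act BT L
| AOutT : BT -> act BT L
| AInS : term BT L -> act BT L
| AOutS : term BT L -> act BT L
| AInL : L -> act BT L
| AOutL : L -> act BT L.
Arguments Check {BT L}.
Arguments Tau {BT L}.
Arguments AInT {BT L}.
Arguments AOutT {BT L}.
Arguments AInS {BT L}.
Arguments AOutS {BT L}.
Arguments AInL {BT L}.
Arguments AOutL {BT L}.

Inductive lts {BT L : Type} : term BT L -> act BT L -> term BT L -> Prop :=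
| lts_one : lts One Check One
| lts_inty : forall b s, lts (InTy b s) (AInT b) s
| lts_outty : forall b s, lts (OutTy b s) (AOutT b) s
| lts_outses : forall a s, lts (OutSes a s) (AOutS a) s
| lts_inses : forall a s, lts (InSes a s) (AInS a) s
| lts_outl : forall l s, lts (Plus [(l, s)]) (AOutL l) s
| lts_plus : forall ls l s, 1 < length ls -> In (l, s) ls ->
    lts (Plus ls) Tau (Plus [(l, s)])
| lts_sum : forall ls l s, In (l, s) ls -> lts (Sum ls) (AInL l) s
| lts_mu : forall x s, lts (Mu x s) Tau (subst x (Mu x s) s).

Definition stable {BT L : Type} (s : term BT L) : Prop :=
  ~ exists s', lts s Tau s'.

Definition bowtie {BT L : Type} (leb : BT -> BT -> Prop)
  (B : term BT L -> term BT L -> Prop) (a1 a2 : act BT L) : Prop :=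
  match a1, a2 with
  | AOutL l1, AInL l2 => l1 = l2
  | AInL l1, AOutL l2 => l1 = l2
  | AOutT t1, AInT t2 => leb t1 t2
  | AInT t1, AOutT t2 => leb t2 t1
  | AOutS s1, AInS s2 => B s1 s2
  | AInS s1, AOutS s2 => B s2 s1
  | _, _ => False
  end.

Inductive par_tau {BT L : Type} (leb : BT -> BT -> Prop)
  (B : term BT L -> term BT L -> Prop) :
  term BT L -> term BT L -> term BT L -> term BT L -> Prop :=
| par_left : forall r r' s, lts r Tau r' -> par_tau leb B r s r' s
| par_right : forall r s s', lts s Tau s' -> par_tau leb B r s r s'
| par_sync : forall r r' s s' a1 a2, lts r a1 r' -> lts s a2 s' ->
    bowtie leb B a1 a2 -> par_tau leb B r s r' s'.

Definition has_par_tau {BT L : Type} (leb : BT -> BT -> Prop)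
  (B : term BT L -> term BT L -> Prop) (r s : term BT L) : Prop :=
  exists r' s', par_tau leb B r s r' s'.

Definition compliance_rel {BT L : Type} (leb : BT -> BT -> Prop)
  (B : term BT L -> term BT L -> Prop)
  (R : term BT L -> term BT L -> Prop) : Prop :=
  forall r s, R r s ->
    (~ has_par_tau leb B r s ->
       (exists r1, lts r Check r1) /\ (exists s1, lts s Check s1)) /\
    (forall r' s', par_tau leb B r s r' s' -> R r' s').

Definition complies {BT L : Type} (leb : BT -> BT -> Prop)
  (B : term BT L -> term BT L -> Prop) (r s : term BT L) : Prop :=
  exists R, compliance_rel leb B R /\ R r s.

Definition subcontract {BT L : Type} (leb : BT -> BT -> Prop)
  (B : term BT L -> term BT L -> Prop) (s1 s2 : term BT L) : Prop :=
  forall r, SC r -> complies leb B r s1 -> complies leb B r s2.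

(* If [rho || s1] were stuck, compliance would force [rho] to terminate, i.e.
   [rho = One].  But [One] has no tau move and its only action, the success
   signal, synchronises with nothing, so [One || s2] could move only by a tau
   of [s2], which is stable. *)
From Stdlib Require Import List Arith RelationClasses Classical.

Lemma lts_Check_One {BT L : Type} (r r' : term BT L) :
  lts r Check r' -> r = One.
Proof. now inversion 1. Qed.

Lemma complies_stuck_Check {BT L : Type} (leb : BT -> BT -> Prop)
  (B : term BT L -> term BT L -> Prop) (r s : term BT L) :
  complies leb B r s -> ~ has_par_tau leb B r s -> exists r', lts r Check r'.
Proof.
  intros [R [HR Hrs]] Hstuck.
  exact (proj1 (proj1 (HR r s Hrs) Hstuck)).
Qed.

Lemma bowtie_Check_l {BT L : Type} (leb : BT -> BT -> Prop)
  (B : term BT L -> term BT L -> Prop) (a : act BT L) :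
  ~ bowtie leb B Check a.
Proof. now destruct a. Qed.

Lemma One_stuck_with_stable {BT L : Type} (leb : BT -> BT -> Prop)
  (B : term BT L -> term BT L -> Prop) (s : term BT L) :
  stable s -> ~ has_par_tau leb B One s.
Proof.
  intros Hs [r' [s' Hmove]].
  inversion Hmove as [? ? ? Hr | ? ? ? Hs' | ? ? ? ? a1 a2 Hr _ Hsync]; subst.
  - inversion Hr.
  - exact (Hs (ex_intro _ s' Hs')).
  - inversion Hr; subst. exact (bowtie_Check_l leb B a2 Hsync).
Qed.

Theorem mainTheorem13 (BT L : Type) (leb : BT -> BT -> Prop)
  (Hpre : PreOrder leb)
  (B : term BT L -> term BT L -> Prop)
  (HB : forall a b, B a b -> SC a /\ SC b)
  (rho s1 s2 : term BT L)
  (Hr : SC rho) (H1 : SC s1) (H2 : SC s2)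
  (Sr : stable rho) (S1 : stable s1) (S2 : stable s2)
  (Hc : complies leb B rho s1)
  (Hs : subcontract leb B s1 s2)
  (Ht : has_par_tau leb B rho s2) :
  has_par_tau leb B rho s1.
Proof.
  apply NNPP; intros Hstuck.
  destruct (complies_stuck_Check leb B rho s1 Hc Hstuck) as [r' Hcheck].
  apply lts_Check_One in Hcheck; subst rho.
  exact (One_stuck_with_stable leb B s2 S2 Ht).
Qed.
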